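(* For every $\mu\in P(\mathbb{R})$ we have $\operatorname{card}\big((\{\mu\}^1)^1\big)=1$ if and only if $\mu$ is a Dirac measure.
   Context: $P(\mathbb{R})$ is the set of Borel probability measures on $\mathbb{R}$, with the Kuiper distance $d_{Ku}(\mu,\nu)=\sup\{|\mu(I)-\nu(I)| : I\text{ a non-degenerate interval of }\mathbb{R}\}$. For $\mathcal{M}\subseteq P(\mathbb{R})$, $\mathcal{M}^1=\{\nu\in P(\mathbb{R}) : d_{Ku}(\mu,\nu)=1\text{ for all }\mu\in\mathcal{M}\}$. A Dirac measure is $\delta_x$, the probability measure concentrated at a point $x\in\mathbb{R}$. *)

From HB Require Import structures.
From mathcomp Require Import all_boot all_order all_algebra.
From mathcomp Require Import all_classical all_reals all_analysis.
Set Implicit Arguments. Unset Strict Implicit. Unset Printing Implicit Defensive.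
Import Order.TTheory GRing.Theory Num.Theory.
Local Open Scope classical_set_scope.
Local Open Scope ring_scope.

(* P(R): Borel probability measures on R are [probability R R], where R is
   equipped with its canonical (Borel) measurable structure. *)

Definition nondeg_itv (R : realType) (i : interval R) : Prop :=
  exists x y : R, x < y /\ x \in i /\ y \in i.

Definition kuiper (R : realType) (mu nu : probability R R) : \bar R :=
  ereal_sup [set `|(mu [set` i] - nu [set` i])%E|%E
            | i in [set i : interval R | nondeg_itv i]].

Definition kuiper_one (R : realType) (M : set (probability R R))
  : set (probability R R) :=
  [set nu | forall mu, M mu -> kuiper mu nu = 1%E].

Definition is_dirac (R : realType) (mu : probability R R) : Prop :=
  exists x : R, forall A : set R, measurable A -> mu A = \d_x A.

(* In MathComp-Analysis a measure is a total function on [set R]; its values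
   on non-Borel sets are irrelevant. *)
Definition same_measure (R : realType) (mu nu : probability R R) : Prop :=
  forall A : set R, measurable A -> mu A = nu A.

Definition card_one (R : realType) (S : set (probability R R)) : Prop :=
  exists2 nu0, S nu0 & forall nu, S nu -> same_measure nu nu0.

(* If mu(A) lies strictly between 0 and 1 for a Borel set A, the conditional
   measure mu(. | A) is at Kuiper distance 1 from every nu that is at distance 1
   from mu, so it belongs to ({mu}^1)^1 together with mu, while the two differ on
   the complement of A.  Hence card (({mu}^1)^1) = 1 forces mu to be {0,1}-valued,
   i.e. a Dirac measure.
   Conversely, let rho be in ({delta_x}^1)^1 and suppose rho gives mass q > 0 to
   the complement B of some ]x - e, x + e[.  Then rho(. | B) vanishes on
   [x, x + e/2], so it is at distance 1 from delta_x, hence at distance 1 from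
   rho; but |rho(U | B) - rho(U)| <= 1 - q for every U.  So rho = delta_x. *)

From HB Require Import structures.
From mathcomp Require Import all_boot all_order all_algebra.
From mathcomp Require Import all_classical all_reals all_analysis.
From mathcomp Require Import lra.
Set Implicit Arguments. Unset Strict Implicit. Unset Printing Implicit Defensive.
Import Order.TTheory GRing.Theory Num.Theory.
Local Open Scope classical_set_scope.
Local Open Scope ring_scope.

Section real_valued_probability.
Context d (T : measurableType d) (R : realType).
Implicit Types (P : probability T R) (A B U : set T).

Definition pr P A : R := fine (P A).

Lemma prE P A : measurable A -> P A = (pr P A)%:E.
Proof. by move=> mA; rewrite /pr fineK// fin_num_measure. Qed.

Lemma pr_ge0 P A : 0 <= pr P A.
Proof. exact: fine_ge0. Qed.

Lemma pr_le1 P A : measurable A -> pr P A <= 1.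
Proof. by move=> mA; rewrite -lee_fin -prE// probability_le1. Qed.

Lemma pr_set0 P : pr P set0 = 0.
Proof. by rewrite /pr measure0. Qed.

Lemma pr_setT P : pr P setT = 1.
Proof. by rewrite /pr probability_setT. Qed.

Lemma le_pr P A B : measurable A -> measurable B -> A `<=` B -> pr P A <= pr P B.
Proof. by move=> mA mB AB; rewrite -lee_fin -!prE// le_measure// inE. Qed.

Lemma pr_setC P A : measurable A -> pr P (~` A) = 1 - pr P A.
Proof.
move=> mA; apply: EFin_inj.
by rewrite -prE ?probability_setC ?prE//; exact: measurableC.
Qed.

Lemma le_pr_setU P A B : measurable A -> measurable B ->
  pr P (A `|` B) <= pr P A + pr P B.
Proof.
by move=> mA mB; rewrite -lee_fin EFinD -!prE ?measureU2//; exact: measurableU.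
Qed.

Lemma pr_setU P A B : measurable A -> measurable B -> A `&` B = set0 ->
  pr P (A `|` B) = pr P A + pr P B.
Proof.
move=> mA mB AB0; apply: EFin_inj.
by rewrite EFinD -!prE ?measureU//; exact: measurableU.
Qed.

Lemma pr_bigcup_eq0 P (F : (set T)^nat) : (forall k, measurable (F k)) ->
  (forall k, pr P (F k) = 0) -> pr P (\bigcup_k F k) = 0.
Proof.
move=> mF F0; have mU := bigcupT_measurable _ mF.
suff /(negligibleP _ mU) : P.-negligible (\bigcup_k F k) by rewrite /pr => ->.
apply: negligible_bigcup => k; apply/negligibleP => //=.
by rewrite (prE P (mF k)) F0.
Qed.

(* When [P B = 0], [mnormalize] returns [P] itself. *)
Definition cond_prob P B (mB : measurable B) : probability T R :=
  mnormalize (mrestr P mB) P.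

Lemma cond_probE P B (mB : measurable B) U : 0 < pr P B -> measurable U ->
  pr (cond_prob P mB) U = pr P (U `&` B) / pr P B.
Proof.
move=> PB0 mU.
have restrE X : (mrestr P mB : {measure set T -> \bar R}) X = P (X `&` B) by [].
have condE : cond_prob P mB U = mnormalize (mrestr P mB) P U by [].
rewrite /pr condE /mnormalize !restrE setTI (prE P mB) eqe (gt_eqF PB0) /=.
by rewrite restrE (prE P (measurableI _ _ mU mB)) -EFinM.
Qed.

End real_valued_probability.

Section kuiper_distance.
Context (R : realType).
Implicit Types (P Q : probability R R) (i : interval R).

Lemma kuiper_itvE P Q i :
  `|(P [set` i] - Q [set` i])|%E = (`|pr P [set` i] - pr Q [set` i]|)%:E.
Proof. by rewrite (prE P (measurable_itv i)) (prE Q (measurable_itv i)). Qed.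

Lemma kuiper_le P Q (c : R) :
  (forall i, nondeg_itv i -> `|pr P [set` i] - pr Q [set` i]| <= c) ->
  (kuiper P Q <= c%:E)%E.
Proof.
by move=> PQc; apply: ge_ereal_sup => _ [i ni <-]; rewrite kuiper_itvE lee_fin PQc.
Qed.

Lemma kuiper_ge P Q i : nondeg_itv i ->
  ((`|pr P [set` i] - pr Q [set` i]|)%:E <= kuiper P Q)%E.
Proof. by move=> ni; apply: ereal_sup_ubound; exists i; rewrite ?kuiper_itvE. Qed.

Lemma kuiper_le1 P Q : (kuiper P Q <= 1)%E.
Proof.
apply: kuiper_le => i _; have mi := measurable_itv i.
have := pr_le1 P mi; have := pr_le1 Q mi; have := pr_ge0 P [set` i].
have := pr_ge0 Q [set` i]; rewrite ler_norml; lra.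
Qed.

Lemma kuiperC P Q : kuiper P Q = kuiper Q P.
Proof.
by congr ereal_sup; apply: eq_imagel => i _; rewrite !kuiper_itvE distrC.
Qed.

Lemma kuiper_eq1P P Q : kuiper P Q = 1%E <->
  forall e : R, 0 < e ->
    exists2 i, nondeg_itv i & 1 - e < `|pr P [set` i] - pr Q [set` i]|.
Proof.
split=> [PQ1 e e0|PQ1].
  have : ((1 - e)%:E < kuiper P Q)%E by rewrite PQ1 lte_fin; lra.
  by move=> /ereal_sup_gt[_ [i ni <-]]; rewrite kuiper_itvE lte_fin; exists i.
apply/le_anti; rewrite kuiper_le1 /=; apply/lee_subgt0Pr => e /PQ1[i ni PQi].
by apply: le_trans (kuiper_ge _ _ ni); rewrite lee_fin ltW.
Qed.

Lemma kuiper_eq1_itv P Q i : nondeg_itv i ->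
  pr P [set` i] = 1 -> pr Q [set` i] = 0 -> kuiper P Q = 1%E.
Proof.
move=> ni Pi1 Qi0; apply/le_anti; rewrite kuiper_le1 /=.
by apply: le_trans (kuiper_ge _ _ ni); rewrite Pi1 Qi0 subr0 normr1.
Qed.

Lemma kuiper_one2_self (mu : probability R R) :
  kuiper_one (kuiper_one [set mu]) mu.
Proof. by move=> nu nu1; rewrite kuiperC; exact: nu1. Qed.

End kuiper_distance.

Section dirac_characterization.
Context (R : realType).
Implicit Types (P : probability R R) (x : R).

Lemma pr_set1_eq1_dirac P x : pr P [set x] = 1 ->
  forall A, measurable A -> P A = \d_x A.
Proof.
move=> Px1 A mA; rewrite diracE (prE P mA); congr EFin.
have mx : measurable [set x] by exact: measurable_set1.
have [xA|xA] /= := boolP (x \in A); apply/le_anti.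
  by rewrite pr_le1 //= -Px1; apply: le_pr => // y ->; exact/set_mem.
rewrite pr_ge0 andbT; have : pr P A <= pr P (~` [set x]).
  apply: le_pr => //; first exact: measurableC.
  by move=> y Ay /= yx; move: xA; rewrite -yx (mem_set Ay).
by rewrite pr_setC // Px1 subrr.
Qed.

Lemma pr_set1_eq1 P x :
  (forall e, 0 < e -> pr P (~` [set` `]x - e, x + e[]) = 0) -> pr P [set x] = 1.
Proof.
move=> P0; have mx : measurable [set x] by exact: measurable_set1.
pose N k := ~` [set` `]x - k.+1%:R^-1, x + k.+1%:R^-1[].
have mN k : measurable (N k) by apply: measurableC; exact: measurable_itv.
have PN0 : pr P (\bigcup_k N k) = 0.
  by apply: pr_bigcup_eq0 => // k; apply: P0; rewrite invr_gt0 ltr0Sn.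
have : pr P (~` [set x]) <= pr P (\bigcup_k N k).
  apply: le_pr; [exact: measurableC | exact: bigcupT_measurable |].
  move=> y /eqP; rewrite -subr_eq0 -normr_gt0 => /ltr_add_invr[k].
  rewrite add0r => kyx; exists k => //.
  by rewrite /N /= in_itv /= -ltr_distl ltNge (ltW kyx).
by rewrite PN0 pr_setC //; have := pr_le1 P mx; lra.
Qed.

Lemma exists_cdf_lt1 P : exists t : R, pr P `]-oo, t] < 1.
Proof.
apply/not_existsP => F1.
have : pr P (\bigcup_n ~` [set` `]-oo, - n%:R]]) = 0.
  apply: pr_bigcup_eq0 => n; first by apply: measurableC; exact: measurable_itv.
  have /negP := F1 (- n%:R); rewrite -leNgt => PF1.
  by apply/eqP; rewrite pr_setC // subr_eq0 eq_le PF1 pr_le1.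
rewrite (_ : \bigcup_n _ = setT) ?pr_setT; first by move=> /eqP; rewrite oner_eq0.
apply/seteqP; split => // y _; exists (Num.truncn (- y)).+1 => //=.
by rewrite in_itv /=; apply/negP; rewrite -ltNge ltrNl truncnS_gt.
Qed.

Lemma exists_cdf_gt0 P : exists t : R, 0 < pr P `]-oo, t].
Proof.
apply/not_existsP => F0.
have : pr P (\bigcup_n [set` `]-oo, n%:R]]) = 0.
  apply: pr_bigcup_eq0 => n; first exact: measurable_itv.
  have /negP := F0 n%:R; rewrite -leNgt => PF0.
  by apply/le_anti; rewrite PF0 pr_ge0.
rewrite (_ : \bigcup_n _ = setT) ?pr_setT; first by move=> /eqP; rewrite oner_eq0.
apply/seteqP; split => // y _; exists (Num.truncn y).+1 => //=.
by rewrite in_itv /= ltW // truncnS_gt.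
Qed.

Lemma zero_one_is_dirac P :
  (forall A, measurable A -> pr P A = 0 \/ pr P A = 1) -> is_dirac P.
Proof.
move=> P01; pose F t := pr P `]-oo, t].
have F01 t : F t = 0 \/ F t = 1 by apply: P01; exact: measurable_itv.
have F_ge0 t : 0 <= F t by exact: pr_ge0.
have F_mono s t : s <= t -> F s <= F t.
  move=> st; apply: le_pr; try exact: measurable_itv.
  by move=> y /=; rewrite !in_itv /= => /le_trans; apply.
pose L := [set t | F t = 0].
have [a Fa0] : exists a, L a.
  have [a Fa] := exists_cdf_lt1 P; exists a.
  by case: (F01 a) => // Fa1; rewrite -/(F a) Fa1 ltxx in Fa.
have [b Fb1] : exists b, F b = 1.
  have [b Fb] := exists_cdf_gt0 P; exists b.
  by case: (F01 b) => // Fb0; rewrite -/(F b) Fb0 ltxx in Fb.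
have Lb t : L t -> t <= b.
  move=> Ft0; rewrite leNgt; apply/negP => /ltW/F_mono.
  by rewrite Ft0 Fb1 ler10.
have supL : has_sup L by split; [exists a | exists b].
pose x := sup L.
have F_left e : 0 < e -> F (x - e) = 0.
  move=> e0; have [t Lt xet] := sup_adherent e0 supL.
  by apply/le_anti; rewrite F_ge0 andbT -[X in _ <= X]Lt F_mono // ltW.
have F_right e : 0 < e -> F (x + e) = 1.
  move=> e0; case: (F01 (x + e)) => // Fxe0.
  by have := sup_upper_bound supL Fxe0; rewrite gerDl leNgt e0.
exists x; apply/pr_set1_eq1_dirac/pr_set1_eq1 => e e0.
have mI (t : R) : measurable `]-oo, t] by exact: measurable_itv.
apply/le_anti; rewrite pr_ge0 andbT.
have : pr P (~` [set` `]x - e, x + e[]) <=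
    F (x - e) + pr P (~` [set` `]-oo, x + e / 2]]).
  apply: le_trans (le_pr_setU _ (mI _) (measurableC (mI _))).
  apply: le_pr; [apply: measurableC; exact: measurable_itv | |].
    by apply: measurableU => //; exact: measurableC.
  move=> y /=; rewrite !in_itv /= => /negP; rewrite negb_and -!leNgt.
  by case/orP => [|yr]; [left | right; apply/negP; rewrite -ltNge; lra].
by rewrite (pr_setC P (mI _)) -/(F _) F_left // F_right ?divr_gt0 // subrr addr0.
Qed.

End dirac_characterization.

Section kuiper_bidual.
Context (R : realType).
Implicit Types (P Q mu : probability R R).

(* Since P (U `&` A) >= P U + P A - 1, conditioning on A keeps P U close to 0
   or to 1 when it already is. *)
Lemma cond_prob_far P Q A (mA : measurable A) U (t : R) :
  0 < pr P A -> 0 < t -> measurable U ->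
  1 - t * pr P A < `|pr P U - pr Q U| ->
  1 - t * (1 + pr P A) < `|pr (cond_prob P mA) U - pr Q U|.
Proof.
move=> PA0 t0 mU PQU; have mUA := measurableI _ _ mU mA.
rewrite cond_probE //; set p := pr P A in PA0 PQU *.
set r := _ / p; have rp : r * p = pr P (U `&` A) by rewrite mulfVK ?gt_eqF.
have UA_le : pr P (U `&` A) <= pr P U by apply: le_pr => //; exact: subIsetl.
have UA_ge : p <= pr P (U `&` A) + (1 - pr P U).
  rewrite -pr_setC //; apply: le_trans (le_pr_setU _ mUA (measurableC mU)).
  apply: le_pr => //; first by apply: measurableU => //; exact: measurableC.
  by move=> y Ay; have [Uy|Uy] := pselect (U y); [left|right].
have := pr_le1 Q mU; have := pr_ge0 Q U; have := pr_le1 P mU.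
move: PQU; rewrite !ltr_normr => /orP[] PQU *; apply/orP.
- have : 0 < (r - (1 - t)) * p by lra.
  by rewrite pmulr_lgt0 // => r_gt; left; lra.
- have : 0 < (t - r) * p by lra.
  by rewrite pmulr_lgt0 // => r_lt; right; have := pr_ge0 P (U `&` A); lra.
Qed.

Lemma kuiper_cond_prob_eq1 P Q A (mA : measurable A) :
  0 < pr P A -> kuiper P Q = 1%E -> kuiper (cond_prob P mA) Q = 1%E.
Proof.
move=> PA0 /kuiper_eq1P PQ1; apply/kuiper_eq1P => e e0.
have e20 : 0 < e / 2 by rewrite divr_gt0.
have [i ni PQi] := PQ1 _ (mulr_gt0 e20 PA0).
exists i => //.
apply: le_lt_trans (cond_prob_far mA PA0 e20 (measurable_itv i) PQi).
suff : e / 2 * pr P A <= e / 2 by lra.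
by rewrite ler_piMr ?pr_le1 ?ltW.
Qed.

Lemma is_dirac_of_card_one_kuiper_one2 mu :
  card_one (kuiper_one (kuiper_one [set mu])) -> is_dirac mu.
Proof.
move=> [nu0 _ nu0_uniq]; apply: zero_one_is_dirac => A mA.
have [->|mu_A0] := eqVneq (pr mu A) 0; first by left.
have [->|mu_A1] := eqVneq (pr mu A) 1; first by right.
have mu_A_gt0 : 0 < pr mu A by rewrite lt_def mu_A0 pr_ge0.
have rho2 : kuiper_one (kuiper_one [set mu]) (cond_prob mu mA).
  by move=> nu nu1; rewrite kuiperC; apply: kuiper_cond_prob_eq1 => //; exact: nu1.
have mAc := measurableC mA.
have : pr (cond_prob mu mA) (~` A) = pr mu (~` A).
  rewrite /pr (nu0_uniq _ rho2 _ mAc).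
  by rewrite (nu0_uniq _ (@kuiper_one2_self _ mu) _ mAc).
rewrite cond_probE // setICl pr_set0 mul0r pr_setC // => /esym/eqP.
by rewrite subr_eq0 eq_sym (negbTE mu_A1).
Qed.

Lemma pr_cond_prob_dist P B (mB : measurable B) U : 0 < pr P B -> measurable U ->
  `|pr (cond_prob P mB) U - pr P U| <= 1 - pr P B.
Proof.
move=> PB0 mU; have mBc := measurableC mB.
have mUB := measurableI _ _ mU mB; have mUBc := measurableI _ _ mU mBc.
have -> : pr P U = pr P (U `&` B) + pr P (U `&` ~` B).
  rewrite -pr_setU //; first by rewrite -setIUr setUCr setIT.
  by rewrite setIACA setICr setI0.
have UBc_ge0 := pr_ge0 P (U `&` ~` B).
have UBc_le : pr P (U `&` ~` B) <= 1 - pr P B.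
  by rewrite -pr_setC //; apply: le_pr => //; exact: subIsetr.
have PB_le1 := pr_le1 P mB.
rewrite cond_probE //; set q := pr P B in PB0 UBc_le PB_le1 *.
set c := _ / q; have cq : c * q = pr P (U `&` B) by rewrite mulfVK ?gt_eqF.
have c_ge0 : 0 <= c by rewrite divr_ge0 ?pr_ge0 ?ltW.
have c_le1 : c <= 1.
  by rewrite ler_pdivrMr // mul1r; apply: le_pr => //; exact: subIsetr.
have : 0 <= c * (1 - q) by rewrite mulr_ge0 ?subr_ge0.
have : 0 <= (1 - c) * (1 - q) by rewrite mulr_ge0 ?subr_ge0.
by rewrite ler_norml => *; apply/andP; split; lra.
Qed.

Lemma kuiper_cond_prob_le P B (mB : measurable B) : 0 < pr P B ->
  (kuiper (cond_prob P mB) P <= (1 - pr P B)%:E)%E.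
Proof. by move=> PB0; apply: kuiper_le => i _; exact: pr_cond_prob_dist. Qed.

Lemma kuiper_dirac_eq1 mu Q (x e : R) : 0 < e ->
  (forall A, measurable A -> mu A = \d_x A) ->
  pr Q [set` `[x, x + e]] = 0 -> kuiper mu Q = 1%E.
Proof.
move=> e0 mu_x Q0; have mI := measurable_itv `[x, x + e].
apply: kuiper_eq1_itv Q0.
  by exists x, (x + e); rewrite !in_itv /= !lexx lerDl ltrDl (ltW e0).
apply: EFin_inj; rewrite -prE // mu_x // diracE mem_set //=.
by rewrite in_itv /= lexx lerDl ltW.
Qed.

Lemma card_one_kuiper_one2_of_dirac mu :
  is_dirac mu -> card_one (kuiper_one (kuiper_one [set mu])).
Proof.
move=> [x mu_x]; exists mu; first exact: kuiper_one2_self.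
move=> rho rho2; suff rho_x1 : pr rho [set x] = 1.
  by move=> A mA; rewrite (pr_set1_eq1_dirac rho_x1 mA) mu_x.
apply: pr_set1_eq1 => e e0; set B := ~` _.
have mB : measurable B by apply: measurableC; exact: measurable_itv.
have [//|rhoB0] := eqVneq (pr rho B) 0.
have rhoB_gt0 : 0 < pr rho B by rewrite lt_def rhoB0 pr_ge0.
have mu_nu : kuiper mu (cond_prob rho mB) = 1%E.
  apply: (@kuiper_dirac_eq1 _ _ x (e / 2)) => //; first by rewrite divr_gt0.
  rewrite cond_probE ?measurable_itv // (_ : _ `&` _ = set0) ?pr_set0 ?mul0r //.
  apply/seteqP; split => // y [+ By]; rewrite /= in_itv /= => /andP[xy ye].
  by apply: By; rewrite /= in_itv /=; apply/andP; split; lra.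
have nu_rho : kuiper (cond_prob rho mB) rho = 1%E by apply: rho2 => _ ->.
by have := kuiper_cond_prob_le mB rhoB_gt0; rewrite nu_rho lee_fin; lra.
Qed.

End kuiper_bidual.

Theorem lemma3p1 (R : realType) (mu : probability R R) :
  card_one (kuiper_one (kuiper_one [set mu])) <-> is_dirac mu.
Proof.
split; first exact: is_dirac_of_card_one_kuiper_one2.
exact: card_one_kuiper_one2_of_dirac.
Qed.
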